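(* Let $R$ be a subring of $\bar{\mathbb{Q}}$ and let $S\subset\mathbb{N}$ be an infinite subset. Then there is no ideal $I$ of $R[q]$ such that the identity of $R[q]$ induces an isomorphism $R[q]^S\cong\varprojlim_j R[q]/I^j$.
   Context: $q$ is an indeterminate. For $n\in\mathbb{N}$, $\Phi_n(q)$ is the $n$th cyclotomic polynomial; for $S\subset\mathbb{N}$, $\Phi_S^*$ is the multiplicative subset of $\mathbb{Z}[q]$ generated by $\{\Phi_m(q):m\in S\}$, directed by divisibility, and $R[q]^S=\varprojlim_{f\in\Phi_S^*}R[q]/(f)$. *)

(* R is a subring of algC (= \bar Q), R[q] is realised as the
   polynomials over algC with coefficients in R. *)
From mathcomp Require Import all_boot all_order all_algebra all_field.
Set Implicit Arguments. Unset Strict Implicit. Unset Printing Implicit Defensive.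
Import Order.TTheory GRing.Theory Num.Theory.
Local Open Scope ring_scope.

Definition PhiC (m : nat) : {poly algC} := map_poly (intr : int -> algC) 'Phi_m.

Definition inRq (R : {pred algC}) (p : {poly algC}) : Prop := p \is a polyOver R.

Definition dvdRq (R : {pred algC}) (f g : {poly algC}) : Prop :=
  exists2 h, inRq R h & g = h * f.

Definition PhiS (S : nat -> Prop) (f : {poly algC}) : Prop :=
  exists s : seq nat, (forall m, m \in s -> S m) /\ f = \prod_(m <- s) PhiC m.

Definition is_ideal (R : {pred algC}) (I : {poly algC} -> Prop) : Prop :=
  [/\ forall p, I p -> inRq R p,
      I 0,
      forall p r, I p -> I r -> I (p + r)
    & forall a p, inRq R a -> I p -> I (a * p)].

Fixpoint ideal_pow (R : {pred algC}) (I : {poly algC} -> Prop) (j : nat)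
  : {poly algC} -> Prop :=
  match j with
  | 0 => inRq R
  | j'.+1 => fun p => exists n (a b : 'I_n -> {poly algC}),
       (forall k, ideal_pow R I j' (a k) /\ I (b k)) /\ p = \sum_(k < n) a k * b k
  end.

(* Elements of R[q]^S = lim_{f in Phi_S^*} R[q]/(f): compatible families. *)
Definition complS (R : {pred algC}) (S : nat -> Prop)
  (x : {poly algC} -> {poly algC}) : Prop :=
  (forall f, PhiS S f -> inRq R (x f)) /\
  (forall f g, PhiS S f -> PhiS S g -> dvdRq R f g -> dvdRq R f (x g - x f)).

Definition eqS (R : {pred algC}) (S : nat -> Prop)
  (x x' : {poly algC} -> {poly algC}) : Prop :=
  forall f, PhiS S f -> dvdRq R f (x f - x' f).

(* Elements of lim_j R[q]/I^j: compatible families. *)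
Definition complI (R : {pred algC}) (I : {poly algC} -> Prop)
  (y : nat -> {poly algC}) : Prop :=
  (forall j, inRq R (y j)) /\
  (forall j k, (j <= k)%N -> ideal_pow R I j (y k - y j)).

Definition eqI (R : {pred algC}) (I : {poly algC} -> Prop)
  (y y' : nat -> {poly algC}) : Prop :=
  forall j, ideal_pow R I j (y j - y' j).

(* The identity of R[q] induces a map R[q]^S -> lim R[q]/I^j (this requires,
   for each j, some F j in Phi_S^* lying in I^j; the induced map is
   x |-> (j |-> x (F j))), and this map is bijective. *)
Definition induced_iso_S_to_I (R : {pred algC}) (S : nat -> Prop)
  (I : {poly algC} -> Prop) : Prop :=
  exists F : nat -> {poly algC},
    (forall j, PhiS S (F j) /\ ideal_pow R I j (F j)) /\
    (forall x x', complS R S x -> complS R S x' ->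
        eqI R I (fun j => x (F j)) (fun j => x' (F j)) -> eqS R S x x') /\
    (forall y, complI R I y ->
        exists2 x, complS R S x & eqI R I (fun j => x (F j)) y).

(* The identity of R[q] induces a map lim R[q]/I^j -> R[q]^S (this requires,
   for each f in Phi_S^*, some G f with I^(G f) contained in (f); the induced
   map is y |-> (f |-> y (G f))), and this map is bijective. *)
Definition induced_iso_I_to_S (R : {pred algC}) (S : nat -> Prop)
  (I : {poly algC} -> Prop) : Prop :=
  exists G : {poly algC} -> nat,
    (forall f, PhiS S f -> forall p, ideal_pow R I (G f) p -> dvdRq R f p) /\
    (forall y y', complI R I y -> complI R I y' ->
        eqS R S (fun f => y (G f)) (fun f => y' (G f)) -> eqI R I y y') /\
    (forall x, complS R S x ->
        exists2 y, complI R I y & eqS R S (fun f => y (G f)) x).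

(* "the identity of R[q] induces an isomorphism R[q]^S ~= lim_j R[q]/I^j",
   read in either direction. *)
Definition id_induces_iso (R : {pred algC}) (S : nat -> Prop)
  (I : {poly algC} -> Prop) : Prop :=
  induced_iso_S_to_I R S I \/ induced_iso_I_to_S R S I.

From HB Require Import structures.
From mathcomp Require Import all_boot all_order all_algebra all_field.
From mathcomp Require Import ring.
From Stdlib Require Import Classical ClassicalEpsilon FunctionalExtensionality.
Import Order.TTheory GRing.Theory Num.Theory.
Local Open Scope ring_scope.
Set Implicit Arguments. Unset Strict Implicit. Unset Printing Implicit Defensive.

(** R[q] is countable, and in either direction the isomorphism would make a
    countable set contain a copy of {0,1}^N.

    If R[q]^S ~ lim R[q]/I^j, the isomorphism provides some u of Phi_S^* in I,
    and u is coprime to Phi_m for every large m in S.  Series sum_k c_k u^k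
    converge I-adically, hence lift to R[q]^S, and the lifts of 0/1 sequences
    are separated modulo Phi_m unless u is invertible modulo Phi_m: two
    sequences first differing at k0 have lifts differing by u^k0 (+-1 + u a).
    So u r = 1 modulo Phi_m for some r; but then the lift of the geometric
    series sum_k (u r)^k inverts 1 - u r, which is 0 modulo Phi_m.

    If lim R[q]/I^j ~ R[q]^S, every p in I has a power divisible by Phi_m for
    all m in S, so p vanishes at primitive roots of infinitely many orders and
    I = 0: the left-hand side is R[q] itself.  Yet the elements
    sum_k c_k (Phi_m Q_k)^k of R[q]^S, c in {0,1}^N, with Q_k coprime to Phi_m,
    are pairwise distinct: two of them first differing at k0 differ modulo
    Phi_m^(k0+1) by +-(Phi_m Q_k0)^k0, which Phi_m^(k0+1) does not divide. *)

Lemma cantor (T : countType) (h : (nat -> bool) -> T) : ~ injective h.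
Proof.
move=> h_inj.
pose inv n := epsilon (inhabits (fun _ : nat => false)) (fun c => pickle (h c) = n).
pose d n := ~~ inv n n.
have inv_d : inv (pickle (h d)) = d.
  apply/h_inj/(pcan_inj pickleK).
  by apply: (epsilon_spec _ (fun c => pickle (h c) = _)); exists d.
have : d (pickle (h d)) = ~~ inv (pickle (h d)) (pickle (h d)) by [].
by rewrite inv_d; case: (d _).
Qed.

Lemma cantor_first_difference (T : countType) (h : (nat -> bool) -> T) :
  ~ (forall c c' k0, c k0 != c' k0 -> (forall k, (k < k0)%N -> c k = c' k) -> h c != h c').
Proof.
move=> h_sep; apply: (@cantor _ h) => c c' hcc'.
apply: functional_extensionality => k1; apply/eqP/negPn/negP => ck1.
have [k0 ck0 k0_min] := ex_minnP (ex_intro (fun k => c k != c' k) k1 ck1).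
have agree k : (k < k0)%N -> c k = c' k.
  by move=> ltk; apply/eqP/negPn/negP => /k0_min; rewrite leqNgt ltk.
by have/eqP := h_sep c c' k0 ck0 agree.
Qed.

Lemma natr_bool_subr_sqr (A : pzRingType) (a b : bool) :
  a != b -> (a%:R - b%:R : A) ^+ 2 = 1.
Proof. by case: a; case: b => //= _; rewrite ?subr0 ?sub0r ?sqrrN expr1n. Qed.

Lemma prim_root_order_inj (A : nzRingType) (z : A) m n :
  m.-primitive_root z -> n.-primitive_root z -> m = n.
Proof.
move=> zm zn; apply/eqP; rewrite eqn_dvd.
by rewrite (prim_order_dvd zm) (prim_expr_order zn) (prim_order_dvd zn) (prim_expr_order zm) !eqxx.
Qed.

Lemma PhiC_cyclotomic n z : n.-primitive_root z -> PhiC n = cyclotomic z n.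
Proof. exact: Cintr_Cyclotomic. Qed.

Lemma PhiC_monic n : PhiC n \is monic.
Proof. by rewrite monic_map // Cyclotomic_monic. Qed.

Lemma root_PhiC n x : (0 < n)%N -> root (PhiC n) x = n.-primitive_root x.
Proof.
move=> n_gt0; have [z zn] := C_prim_root_exists n_gt0.
by rewrite (PhiC_cyclotomic zn) root_cyclotomic.
Qed.

Lemma size_PhiC_gt1 n : (0 < n)%N -> (1 < size (PhiC n))%N.
Proof.
move=> n_gt0; have [z zn] := C_prim_root_exists n_gt0.
by rewrite (PhiC_cyclotomic zn) size_cyclotomic ltnS totient_gt0.
Qed.

Lemma PhiC_dvdp1 n : (0 < n)%N -> (PhiC n %| 1) = false.
Proof. by move=> n_gt0; rewrite dvdp1 gtn_eqF ?size_PhiC_gt1. Qed.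

Lemma coprimep_PhiC m n : (0 < m)%N -> (0 < n)%N -> m != n -> coprimep (PhiC m) (PhiC n).
Proof.
move=> m_gt0 n_gt0 neq_mn; apply: Pdiv.ClosedField.root_coprimep.
move=> x xm; apply: contra neq_mn => xn.
by apply/eqP/(prim_root_order_inj (z := x)); rewrite -root_PhiC.
Qed.

Lemma coprimep_PhiC_prod m (s : seq nat) (P : pred nat) : (0 < m)%N ->
  (forall t, t \in s -> P t -> (0 < t)%N && (t != m)) ->
  coprimep (PhiC m) (\prod_(t <- s | P t) PhiC t).
Proof.
move=> m_gt0 s_ok; rewrite big_seq_cond.
apply: (big_ind (coprimep (PhiC m))) => [|p q|t /andP[ts Pt]]; first exact: coprimep1.
  by rewrite coprimepMr => -> ->.
by have /andP[t_gt0 neq_tm] := s_ok t ts Pt; rewrite coprimep_PhiC // eq_sym.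
Qed.

Lemma dvdp_prod_exp (F : idomainType) (I : eqType) (s : seq I) (p : I -> {poly F}) g :
  (forall i, i \in s -> p i %| g) -> \prod_(i <- s) p i %| g ^+ size s.
Proof.
elim: s => [|i s IHs] p_dvd_g; first by rewrite big_nil dvd1p.
rewrite big_cons exprS dvdp_mul ?p_dvd_g ?mem_head // IHs // => j js.
by rewrite p_dvd_g // inE js orbT.
Qed.

Lemma exists_uniq_seq (S : nat -> Prop) :
  (forall n, exists m, (n <= m)%N /\ S m) ->
  forall n, exists s : seq nat, [/\ size s = n, uniq s & forall m, m \in s -> S m].
Proof.
move=> S_inf; elim=> [|n [s [sz_s uniq_s s_S]]]; first by exists [::].
have [m [max_lt_m Sm]] := S_inf (\max_(t <- s) t).+1.
exists (m :: s); split=> /=; [by rewrite sz_s | | by move=> t; rewrite inE => /predU1P[->|/s_S]].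
rewrite uniq_s andbT; apply/negP => ms.
by have := leq_bigmax_seq (F := id) _ ms isT; rewrite leqNgt max_lt_m.
Qed.

Lemma poly_eq0_prim_roots (S : nat -> Prop) (p : {poly algC}) :
  (forall m, S m -> (0 < m)%N) -> (forall n, exists m, (n <= m)%N /\ S m) ->
  (forall m z, S m -> m.-primitive_root z -> root p z) -> p = 0.
Proof.
move=> S_gt0 S_inf p_roots; apply: contra_eq isT => p_neq0.
have [s [sz_s uniq_s s_S]] := exists_uniq_seq S_inf (size p).
have [z zP] : exists z : nat -> algC, forall m, S m -> m.-primitive_root (z m).
  apply: (choice (fun m z => S m -> m.-primitive_root z)) => m.
  have [->|m_gt0] := posnP m; first by exists 0 => /S_gt0.
  by have [z zm] := C_prim_root_exists m_gt0; exists z.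
have := max_poly_roots p_neq0 (rs := map z s).
rewrite size_map sz_s ltnn; apply.
  by apply/allP => _ /mapP[m /s_S Sm ->]; apply: p_roots (zP m Sm).
rewrite map_inj_in_uniq // => m n /s_S/zP zm /s_S/zP zn ezmn.
by apply: prim_root_order_inj zm _; rewrite ezmn.
Qed.

Lemma PhiS_monic (S : nat -> Prop) f : PhiS S f -> f \is monic.
Proof. by case=> s [_ ->]; apply: monic_prod => i _; apply: PhiC_monic. Qed.

Lemma PhiS_exp (S : nat -> Prop) m n : S m -> PhiS S (PhiC m ^+ n).
Proof.
move=> Sm; exists (nseq n m); split; first by move=> k /nseqP[->].
by elim: n => [|n IHn]; rewrite ?big_nil // big_cons -IHn exprS.
Qed.

Lemma PhiS_PhiC (S : nat -> Prop) m : S m -> PhiS S (PhiC m).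
Proof. by rewrite -[PhiC m]expr1; apply: PhiS_exp. Qed.

Lemma dvdRq_dvdp (R : {pred algC}) f g : dvdRq R f g -> f %| g.
Proof. by case=> h _ ->; apply: dvdp_mulIr. Qed.

Definition series (A : pzSemiRingType) (T c : nat -> A) n := \sum_(0 <= k < n) c k * T k.

Lemma seriesB (A : pzRingType) (T c : nat -> A) m n : (m <= n)%N ->
  series T c n - series T c m = \sum_(m <= k < n) c k * T k.
Proof. by move=> le_mn; rewrite /series (big_cat_nat (leq0n m) le_mn) /= addrAC subrr add0r. Qed.

Lemma series_first_diff (A : pzRingType) (T c c' : nat -> A) k0 :
  (forall k, (k < k0)%N -> c k = c' k) ->
  series T c k0.+1 - series T c' k0.+1 = (c k0 - c' k0) * T k0.
Proof.
move=> agree; rewrite /series !big_nat_recr //=.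
rewrite (eq_big_nat _ _ (F2 := fun k => c' k * T k)) => [|k /andP[_ ltk]]; last by rewrite agree.
by rewrite opprD addrACA subrr add0r mulrBl.
Qed.

Lemma series_exp_shift (A : comPzRingType) (u : A) c n j :
  series (fun k => u ^+ k) c (n + j) =
  series (fun k => u ^+ k) c n + u ^+ n * series (fun k => u ^+ k) (fun k => c (k + n)%N) j.
Proof.
rewrite /series (big_cat_nat (leq0n n) (leq_addr j n)) /=; congr (_ + _).
rewrite -{1}(add0n n) big_addn addKn mulr_sumr; apply: eq_bigr => k _.
by rewrite exprD mulrA mulrC.
Qed.

Local Notation digits b := (fun k => ((b k : bool) : nat)%:R : {poly algC}).

Section Subring.

Variable R : {pred algC}.
Hypothesis R_subring : subring_closed R.
HB.instance Definition _ := GRing.isSubringClosed.Build algC R R_subring.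

Lemma PhiC_polyOver m : PhiC m \is a polyOver R.
Proof. by apply/polyOverP => i; rewrite coef_map rpred_int. Qed.

Lemma PhiS_polyOver (S : nat -> Prop) f : PhiS S f -> f \is a polyOver R.
Proof. by case=> s [_ ->]; apply: rpred_prod => m _; apply: PhiC_polyOver. Qed.

Lemma rdivp_polyOver (g d : {poly algC}) :
  g \is a polyOver R -> d \is a polyOver R -> Pdiv.Ring.rdivp g d \is a polyOver R.
Proof.
move=> Rg Rd; rewrite /Pdiv.Ring.rdivp /Pdiv.Ring.redivp locked_withE.
rewrite /Pdiv.Ring.redivp_expanded_def.
case: eqP => _ /=; first exact: rpred0.
have Rlead r : r \is a polyOver R -> lead_coef r \in R by rewrite lead_coefE => /polyOverP.
suff: forall n k qq r, qq \is a polyOver R -> r \is a polyOver R ->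
    let res := Pdiv.Ring.redivp_rec d k qq r n in
    (res.1.2 \is a polyOver R) && (res.2 \is a polyOver R).
  by move=> /(_ (size g) 0%N 0 g (rpred0 _) Rg) /andP[].
elim=> [|n IHn] k qq r Rqq Rr /=; case: ifP => _; rewrite ?Rqq ?Rr //= -mul_polyC.
  by rewrite ?(rpredD, rpredN, rpredM, polyOverC, polyOverXn) ?Rlead.
by apply: IHn; rewrite ?(rpredD, rpredN, rpredM, polyOverC, polyOverXn) ?Rlead.
Qed.

Lemma dvdRqP f g : f \is monic -> f \is a polyOver R -> g \is a polyOver R ->
  reflect (dvdRq R f g) (f %| g).
Proof.
move=> f_monic Rf Rg; apply: (iffP idP) => [f_dvd_g|]; last exact: dvdRq_dvdp.
exists (g %/ f); last by rewrite divpK.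
by rewrite /inRq (Pdiv.IdomainMonic.divpE f_monic) rdivp_polyOver.
Qed.

Lemma series_polyOver T c n : (forall k, T k \is a polyOver R) ->
  (forall k, c k \is a polyOver R) -> series T c n \is a polyOver R.
Proof. by move=> RT Rc; apply: rpred_sum => k _; rewrite rpredM. Qed.

Lemma dvdRq_trans f g p : dvdRq R f g -> dvdRq R g p -> dvdRq R f p.
Proof.
by move=> [h Rh ->] [h' Rh' ->]; exists (h' * h); [apply: rpredM | rewrite mulrA].
Qed.

Lemma polyOver_is_ideal : is_ideal R (inRq R).
Proof.
by split=> // [|p q|a p]; rewrite /inRq; [apply: rpred0 | apply: rpredD | apply: rpredM].
Qed.

Lemma dvdRq_is_ideal f : f \is a polyOver R -> is_ideal R (dvdRq R f).
Proof.
move=> Rf; split=> [_ [h Rh ->]||_ _ [h Rh ->] [h' Rh' ->]|a _ Ra [h Rh ->]].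
- exact: rpredM.
- by exists 0; rewrite ?mul0r //; apply: rpred0.
- by exists (h + h'); rewrite ?mulrDl //; apply: rpredD.
- by exists (a * h); rewrite ?mulrA //; apply: rpredM.
Qed.

Section Ideal.

Variable J : {poly algC} -> Prop.
Hypothesis J_ideal : is_ideal R J.

Lemma idealMl a p : a \is a polyOver R -> J p -> J (a * p).
Proof. by case: J_ideal => _ _ _; apply. Qed.

Lemma idealN p : J p -> J (- p).
Proof. by rewrite -mulN1r; apply: idealMl; rewrite rpredN rpred1. Qed.

Lemma idealB p q : J p -> J q -> J (p - q).
Proof. by case: J_ideal => _ _ JD _ Jp /idealN; apply: JD. Qed.

Lemma ideal_sum (I : Type) (r : seq I) (P : pred I) (F : I -> {poly algC}) :
  (forall i, P i -> J (F i)) -> J (\sum_(i <- r | P i) F i).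
Proof. by case: J_ideal => _ J0 JD _; apply: big_ind. Qed.

Lemma ideal_series_tail T c m n : (forall k, c k \is a polyOver R) ->
  (forall k, (m <= k)%N -> J (T k)) -> (m <= n)%N -> J (series T c n - series T c m).
Proof.
move=> Rc JT le_mn; rewrite seriesB // big_nat_cond.
by apply: ideal_sum => k /andP[/andP[le_mk _] _]; apply/idealMl/JT.
Qed.

End Ideal.

Lemma ideal_pow_is_ideal I j : is_ideal R I -> is_ideal R (ideal_pow R I j).
Proof.
move=> I_ideal; elim: j => [|j IHj] /=; first exact: polyOver_is_ideal.
have [Isub _ _ _] := I_ideal; have [Jsub _ _ JM] := IHj.
split.
- move=> _ [n [a [b [ab ->]]]]; apply: rpred_sum => k _.
  by have [/Jsub Ra /Isub Rb] := ab k; apply: rpredM.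
- by exists 0%N, (fun _ => 0), (fun _ => 0); rewrite big_ord0; split=> // [[]].
- move=> _ _ [n1 [a1 [b1 [ab1 ->]]]] [n2 [a2 [b2 [ab2 ->]]]].
  pose glue (x1 : 'I_n1 -> {poly algC}) (x2 : 'I_n2 -> {poly algC}) k :=
    match split k with inl i => x1 i | inr i => x2 i end.
  exists (n1 + n2)%N, (glue a1 a2), (glue b1 b2); split.
    by move=> k; rewrite /glue; case: (split k).
  rewrite big_split_ord; congr (_ + _); apply: eq_bigr => i _.
    by rewrite /glue (unsplitK (inl _)).
  by rewrite /glue (unsplitK (inr _)).
- move=> c _ Rc [n [a [b [ab ->]]]]; exists n, (fun k => c * a k), b; split.
    by move=> k; have [/(JM _ _ Rc) ? ?] := ab k.
  by rewrite mulr_sumr; apply: eq_bigr => k _; rewrite mulrA.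
Qed.

Lemma ideal_pow1 I p : is_ideal R I -> ideal_pow R I 1 p -> I p.
Proof.
move=> I_ideal [n [a [b [ab ->]]]]; apply: (ideal_sum I_ideal) => k _.
by have [Ra Ib] := ab k; apply: idealMl.
Qed.

Lemma ideal_pow_exp I p i j : is_ideal R I -> I p -> (j <= i)%N -> ideal_pow R I j (p ^+ i).
Proof.
move=> I_ideal Ip le_ji; have [Isub _ _ _] := I_ideal.
have pj_in : ideal_pow R I j (p ^+ j).
  elim: j {le_ji} => [|j IHj] /=; first by rewrite /inRq rpredX ?Isub.
  by exists 1%N, (fun _ => p ^+ j), (fun _ => p); rewrite big_ord1 exprSr.
rewrite -(subnK le_ji) exprD; apply: (idealMl (ideal_pow_is_ideal j I_ideal)) pj_in.
by rewrite rpredX ?Isub.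
Qed.

Section Completion.

Variable S : nat -> Prop.

Lemma complS_cst c : c \is a polyOver R -> complS R S (fun _ => c).
Proof.
move=> Rc; split=> // f g Sf _ _; rewrite subrr.
by case: (dvdRq_is_ideal (PhiS_polyOver Sf)).
Qed.

Lemma complS_B x x' : complS R S x -> complS R S x' -> complS R S (fun f => x f - x' f).
Proof.
move=> [Rx x_compat] [Rx' x'_compat].
split=> [f Sf|f g Sf Sg fg]; first by rewrite /inRq rpredB ?Rx ?Rx'.
have -> : x g - x' g - (x f - x' f) = (x g - x f) - (x' g - x' f) by ring.
by apply: (idealB (dvdRq_is_ideal (PhiS_polyOver Sf))); [apply: x_compat | apply: x'_compat].
Qed.

Lemma complS_Ml a x : a \is a polyOver R -> complS R S x -> complS R S (fun f => a * x f).
Proof.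
move=> Ra [Rx x_compat]; split=> [f Sf|f g Sf Sg fg]; first by rewrite /inRq rpredM ?Rx.
by rewrite -mulrBr; apply: (idealMl (dvdRq_is_ideal (PhiS_polyOver Sf))) => //; apply: x_compat.
Qed.

End Completion.

Section NoIsoFromCyclotomicCompletion.

Variables (S : nat -> Prop) (I : {poly algC} -> Prop) (F : nat -> {poly algC}).
Hypothesis I_ideal : is_ideal R I.
Hypothesis F_ideal_pow : forall j, ideal_pow R I j (F j).
Hypothesis lift_inj : forall x x', complS R S x -> complS R S x' ->
  eqI R I (fun j => x (F j)) (fun j => x' (F j)) -> eqS R S x x'.
Hypothesis lift_surj : forall y, complI R I y ->
  exists2 x, complS R S x & eqI R I (fun j => x (F j)) y.

Local Notation u := (F 1%N).
Local Notation useries := (series (fun k => u ^+ k)).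

Lemma u_in_I : I u.
Proof. exact: ideal_pow1 I_ideal (F_ideal_pow 1). Qed.

Lemma u_polyOver : u \is a polyOver R.
Proof. by case: I_ideal => Isub _ _ _; apply/Isub/u_in_I. Qed.

Lemma useries_polyOver c n : (forall k, c k \is a polyOver R) -> useries c n \is a polyOver R.
Proof. by apply: series_polyOver => k; rewrite rpredX ?u_polyOver. Qed.

Lemma useries_complI c : (forall k, c k \is a polyOver R) -> complI R I (useries c).
Proof.
move=> Rc; split=> [j|j k le_jk]; first exact: useries_polyOver.
apply: (ideal_series_tail (ideal_pow_is_ideal j I_ideal)) => // i le_ji.
exact: ideal_pow_exp u_in_I le_ji.
Qed.

Lemma dvdp_of_lift_eq0 x : complS R S x -> (forall j, ideal_pow R I j (x (F j))) ->
  forall f, PhiS S f -> f %| x f.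
Proof.
move=> Sx x_eq0 f Sf; rewrite -[x f]subr0; apply: dvdRq_dvdp.
by apply: (lift_inj Sx (complS_cst _ (rpred0 _))) => // j; rewrite subr0.
Qed.

Lemma lift_useries_shift c n x x' : (forall k, c k \is a polyOver R) ->
  complS R S x -> eqI R I (fun j => x (F j)) (useries c) ->
  complS R S x' -> eqI R I (fun j => x' (F j)) (useries (fun k => c (k + n)%N)) ->
  forall f, PhiS S f -> f %| x f - useries c n - u ^+ n * x' f.
Proof.
move=> Rc Sx x_lift Sx' x'_lift; apply: dvdp_of_lift_eq0.
  apply: complS_B (complS_Ml _ Sx'); last by rewrite rpredX ?u_polyOver.
  exact: complS_B Sx (complS_cst _ (useries_polyOver _ Rc)).
move=> j; have Ij := ideal_pow_is_ideal j I_ideal.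
have -> : x (F j) - useries c n - u ^+ n * x' (F j) =
    (x (F j) - useries c j) - u ^+ n * (x' (F j) - useries (fun k => c (k + n)%N) j)
    - (useries c (n + j) - useries c j) by rewrite series_exp_shift; ring.
apply: (idealB Ij); first apply: (idealB Ij); first exact: x_lift.
  by apply: (idealMl Ij); [rewrite rpredX ?u_polyOver | apply: x'_lift].
apply: (ideal_series_tail Ij) => // [k le_jk|]; last exact: leq_addl.
exact: ideal_pow_exp u_in_I le_jk.
Qed.

Variable m : nat.
Hypotheses (m_gt0 : (0 < m)%N) (Sm : S m) (coprime_Phi_u : coprimep (PhiC m) u).
Local Notation P := (PhiC m).

Lemma u_not_unit_mod_Phi r : r \is a polyOver R -> ~~ (P %| u * r - 1).
Proof.
move=> Rr; apply/negP => P_dvd_ur1.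
have Rv : 1 - u * r \is a polyOver R by rewrite rpredB ?rpred1 ?rpredM ?u_polyOver.
have [x Sx x_lift] := lift_surj (useries_complI (fun k => rpredX k Rr)).
have geom j : (1 - u * r) * useries (fun k => r ^+ k) j = 1 - (u * r) ^+ j.
  have -> : useries (fun k => r ^+ k) j = \sum_(i < j) (u * r) ^+ i.
    by rewrite /series big_mkord; apply: eq_bigr => k _; rewrite exprMn mulrC.
  by rewrite -opprB mulNr -subrX1 opprB.
have : P %| (1 - u * r) * x P - 1.
  apply: (dvdp_of_lift_eq0 (x := fun f => (1 - u * r) * x f - 1)) (PhiS_PhiC Sm).
    exact: complS_B (complS_Ml Rv Sx) (complS_cst _ (rpred1 _)).
  move=> j; have Ij := ideal_pow_is_ideal j I_ideal.
  have -> : (1 - u * r) * x (F j) - 1 =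
      (1 - u * r) * (x (F j) - useries (fun k => r ^+ k) j) - r ^+ j * u ^+ j.
    by rewrite mulrBr geom exprMn; ring.
  apply: (idealB Ij); first by apply: (idealMl Ij) => //; apply: x_lift.
  by apply: (idealMl Ij); [rewrite rpredX | apply: ideal_pow_exp u_in_I _].
move=> /dvdp_add /(_ (dvdp_mulr (x P) P_dvd_ur1)).
have -> : (1 - u * r) * x P - 1 + (u * r - 1) * x P = - 1 by ring.
by rewrite dvdpNr PhiC_dvdp1.
Qed.

Lemma lift_digits_exists (b : nat -> bool) :
  exists x, complS R S x /\ eqI R I (fun j => x (F j)) (useries (digits b)).
Proof.
have [x Sx x_lift] := lift_surj (useries_complI (c := digits b) (fun k => rpred_nat _ _)).
by exists x.
Qed.

Let lift_digits (b : nat -> bool) := epsilon (inhabits (fun _ => 0))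
  (fun x => complS R S x /\ eqI R I (fun j => x (F j)) (useries (digits b))).

Lemma lift_digitsP b :
  complS R S (lift_digits b) /\ eqI R I (fun j => lift_digits b (F j)) (useries (digits b)).
Proof. exact: epsilon_spec (lift_digits_exists b). Qed.

Lemma lift_digits_first_diff (b b' : nat -> bool) k0 :
  b k0 != b' k0 -> (forall k, (k < k0)%N -> b k = b' k) ->
  P %| lift_digits b P - lift_digits b' P -> exists2 r, r \is a polyOver R & P %| u * r - 1.
Proof.
move=> neq_bb' agree P_dvd_L.
pose shift (b0 : nat -> bool) k := b0 (k + k0.+1)%N.
pose d : {poly algC} := (b k0)%:R - (b' k0)%:R.
pose A := lift_digits (shift b) P - lift_digits (shift b') P.
have tail (b0 : nat -> bool) := lift_useries_shift (c := digits b0) (n := k0.+1)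
  (fun k => rpred_nat _ _) (lift_digitsP b0).1 (lift_digitsP b0).2
  (lift_digitsP (shift b0)).1 (lift_digitsP (shift b0)).2 (PhiS_PhiC Sm).
have first_diff : useries (digits b) k0.+1 - useries (digits b') k0.+1 = d * u ^+ k0.
  by apply: series_first_diff => k ltk; rewrite agree.
have := dvdp_sub (dvdp_sub (tail b) (tail b')) P_dvd_L.
have -> : lift_digits b P - useries (digits b) k0.+1 - u ^+ k0.+1 * lift_digits (shift b) P
    - (lift_digits b' P - useries (digits b') k0.+1 - u ^+ k0.+1 * lift_digits (shift b') P)
    - (lift_digits b P - lift_digits b' P) = - (u ^+ k0 * (d + u * A)).
  transitivity (- ((useries (digits b) k0.+1 - useries (digits b') k0.+1)
                   + u ^+ k0.+1 * A)); first by rewrite /A; ring.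
  by rewrite first_diff exprSr; ring.
rewrite dvdpNr Gauss_dvdpr ?coprimep_expr // => P_dvd.
have RL b0 : lift_digits b0 P \is a polyOver R := (lift_digitsP b0).1.1 _ (PhiS_PhiC Sm).
exists (- (d * A)); first by rewrite rpredN rpredM ?rpredB ?rpred_nat ?RL.
have dd : d * d = 1 by rewrite -expr2 natr_bool_subr_sqr.
have -> : u * - (d * A) - 1 = - (d * d + u * (d * A)) by rewrite dd; ring.
have -> : d * d + u * (d * A) = d * (d + u * A) by ring.
by rewrite dvdpNr dvdp_mull.
Qed.

Lemma u_unit_mod_Phi : exists2 r, r \is a polyOver R & P %| u * r - 1.
Proof.
apply: NNPP => no_unit.
apply: (@cantor_first_difference _ (fun b => lift_digits b P %% P)) => b b' k0 neq_bb' agree.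
apply/negP => /eqP eq_mod; apply/no_unit/(lift_digits_first_diff neq_bb' agree).
by rewrite /dvdp modpD modpN eq_mod subrr.
Qed.

Lemma lift_iso_false : False.
Proof. by have [r /u_not_unit_mod_Phi/negP] := u_unit_mod_Phi. Qed.

End NoIsoFromCyclotomicCompletion.

Lemma no_induced_iso_S_to_I S I :
  (forall m, S m -> (0 < m)%N) -> (forall n, exists m, (n <= m)%N /\ S m) ->
  is_ideal R I -> ~ induced_iso_S_to_I R S I.
Proof.
move=> S_gt0 S_inf I_ideal [F [F_ok [lift_inj lift_surj]]].
have [[s [s_S F1_eq]] _] := F_ok 1%N.
have [m [max_lt_m Sm]] := S_inf (\max_(t <- s) t).+1.
have m_gt0 := S_gt0 m Sm.
apply: (lift_iso_false I_ideal (fun j => (F_ok j).2) lift_inj lift_surj m_gt0 Sm).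
rewrite F1_eq; apply: coprimep_PhiC_prod => // t ts _; rewrite (S_gt0 t (s_S t ts)) /=.
by apply: contraTneq max_lt_m => <-; rewrite -leqNgt (leq_bigmax_seq (F := id)).
Qed.

Section NoIsoToCyclotomicCompletion.

Variables (S : nat -> Prop) (I : {poly algC} -> Prop) (G : {poly algC} -> nat).
Hypothesis S_gt0 : forall m, S m -> (0 < m)%N.
Hypothesis S_inf : forall n, exists m, (n <= m)%N /\ S m.
Hypothesis I_ideal : is_ideal R I.
Hypothesis G_dvd : forall f, PhiS S f -> forall p, ideal_pow R I (G f) p -> dvdRq R f p.
Hypothesis restr_surj : forall x, complS R S x ->
  exists2 y, complI R I y & eqS R S (fun f => y (G f)) x.

Lemma ideal_eq0 p : I p -> p = 0.
Proof.
move=> Ip; apply: (poly_eq0_prim_roots S_gt0 S_inf) => m z Sm zm.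
have Phi_dvd := dvdRq_dvdp (G_dvd (PhiS_PhiC Sm) (ideal_pow_exp I_ideal Ip (leqnn _))).
have := root_dvdp Phi_dvd (x := z); rewrite root_PhiC ?S_gt0 // => /(_ zm).
by rewrite /root horner_exp expf_eq0 => /andP[].
Qed.

Lemma ideal_pow_eq0 j p : (0 < j)%N -> ideal_pow R I j p -> p = 0.
Proof.
case: j => // j _ [n [a [b [ab ->]]]]; apply: big1 => k _.
by have [_ /ideal_eq0 ->] := ab k; rewrite mulr0.
Qed.

Lemma complI_const y j : complI R I y -> (0 < j)%N -> y j = y 1%N.
Proof.
by case=> _ y_compat j_gt0; apply/subr0_eq/(ideal_pow_eq0 (isT : 0 < 1)%N)/y_compat.
Qed.

Variable m : nat.
Hypothesis Sm : S m.
Local Notation P := (PhiC m).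

(* Phi_m is left out of Q k so that Phi_m^(k0+1) divides T k exactly when k0 < k. *)
Let Q k := \prod_(t <- iota 1 k | t != m) PhiC t.
Let T k := (P * Q k) ^+ k.

Lemma coprimep_Phi_Q k : coprimep P (Q k).
Proof.
apply: coprimep_PhiC_prod => [|t]; first exact: S_gt0.
by rewrite mem_iota => /andP[-> _] ->.
Qed.

Lemma PhiC_dvdp_PQ t k : (0 < t <= k)%N -> PhiC t %| P * Q k.
Proof.
move=> /andP[t_gt0 le_tk]; have [-> | neq_tm] := eqVneq t m; first exact: dvdp_mulr.
apply: dvdp_mull; rewrite /Q (big_rem t) /= ?neq_tm ?dvdp_mulr //.
by rewrite mem_iota t_gt0 add1n ltnS.
Qed.

Lemma T_polyOver k : T k \is a polyOver R.
Proof.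
rewrite /T /Q rpredX ?rpredM ?PhiC_polyOver // rpred_prod // => t _.
exact: PhiC_polyOver.
Qed.

Lemma PhiS_dvdp_T f : PhiS S f -> exists n, forall k, (n <= k)%N -> f %| T k.
Proof.
case=> s [s_S ->]; exists (maxn (size s) (\max_(t <- s) t)) => k.
rewrite geq_max => /andP[le_sk le_maxk]; apply: dvdp_trans (dvdp_exp2l _ le_sk).
apply: dvdp_prod_exp => t ts; rewrite PhiC_dvdp_PQ // (S_gt0 (s_S t ts)) /=.
exact: leq_trans (leq_bigmax_seq (F := id) _ ts isT) le_maxk.
Qed.

Lemma Phi_exp_dvdp_T k0 k : (k0 < k)%N -> P ^+ k0.+1 %| T k.
Proof. by move=> lt_k0k; rewrite /T exprMn dvdp_mulr ?dvdp_exp2l. Qed.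

Lemma Phi_exp_dvdp_T_eq k : (P ^+ k.+1 %| T k) = false.
Proof.
rewrite /T exprMn exprSr dvdp_mul2l ?expf_neq0 ?monic_neq0 ?PhiC_monic //.
by rewrite -[Q k ^+ k]mulr1 Gauss_dvdpr ?coprimep_expr ?coprimep_Phi_Q // PhiC_dvdp1 ?S_gt0.
Qed.

Lemma dvdRq_of_dvdp_T f k : PhiS S f -> f %| T k -> dvdRq R f (T k).
Proof.
move=> Sf; apply/dvdRqP; last exact: T_polyOver.
  exact: PhiS_monic Sf.
exact: PhiS_polyOver Sf.
Qed.

(* Any level beyond which f divides all T k would do: X c is then the element
   sum_k c_k T_k of R[q]^S. *)
Let N f := epsilon (inhabits 0%N) (fun n => forall k, (n <= k)%N -> f %| T k).

Lemma dvdRq_T f k : PhiS S f -> (N f <= k)%N -> dvdRq R f (T k).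
Proof.
move=> Sf le_Nk; apply: (dvdRq_of_dvdp_T Sf); move: k le_Nk; rewrite /N.
apply: (epsilon_spec _ (fun n => forall k, (n <= k)%N -> f %| T k)).
exact: PhiS_dvdp_T.
Qed.

Local Notation bseries c := (series T (digits c)).
Let X (c : nat -> bool) f := bseries c (N f).

Lemma dvdRq_bseries_X (c : nat -> bool) f n :
  PhiS S f -> (N f <= n)%N -> dvdRq R f (bseries c n - X c f).
Proof.
move=> Sf le_Nn; apply: (ideal_series_tail (dvdRq_is_ideal (PhiS_polyOver Sf))) => //.
  by move=> k; apply: rpred_nat.
by move=> k; apply: dvdRq_T.
Qed.

Lemma complS_X (c : nat -> bool) : complS R S (X c).
Proof.
split=> [f _|f g Sf Sg fg].
  by apply: series_polyOver => k; rewrite ?T_polyOver ?rpred_nat.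
have Jf := dvdRq_is_ideal (PhiS_polyOver Sf).
have -> : X c g - X c f = (bseries c (maxn (N f) (N g)) - X c f)
                          - (bseries c (maxn (N f) (N g)) - X c g) by ring.
apply: (idealB Jf); first by apply: dvdRq_bseries_X; rewrite ?leq_maxl.
by apply: dvdRq_trans fg _; apply: dvdRq_bseries_X; rewrite ?leq_maxr.
Qed.

Lemma X_separates (c c' : nat -> bool) k0 :
  c k0 != c' k0 -> (forall k, (k < k0)%N -> c k = c' k) ->
  (P ^+ k0.+1 %| X c (P ^+ k0.+1) - X c' (P ^+ k0.+1)) = false.
Proof.
set f := P ^+ k0.+1; move=> neq_cc' agree; apply/negP => f_dvd_X.
have Sf : PhiS S f := PhiS_exp _ Sm.
have Jf := dvdRq_is_ideal (PhiS_polyOver Sf).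
pose n := maxn (N f) k0.+1; pose d : {poly algC} := (c k0)%:R - (c' k0)%:R.
have tail (c0 : nat -> bool) : dvdRq R f (bseries c0 n - bseries c0 k0.+1).
  apply: (ideal_series_tail Jf) => [k|k lt_k0k|]; rewrite ?rpred_nat ?leq_maxr //.
  exact/(dvdRq_of_dvdp_T Sf)/Phi_exp_dvdp_T.
have : f %| d * T k0.
  rewrite -(series_first_diff T (c := digits c) (c' := digits c'));
    last by move=> k ltk; rewrite agree.
  have -> : bseries c k0.+1 - bseries c' k0.+1 =
      (X c f - X c' f) + (bseries c n - X c f) - (bseries c' n - X c' f)
      - (bseries c n - bseries c k0.+1) + (bseries c' n - bseries c' k0.+1) by ring.
  apply/dvdp_add/dvdRq_dvdp/tail; apply/dvdp_sub/dvdRq_dvdp/tail.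
  apply/dvdp_sub/dvdRq_dvdp/dvdRq_bseries_X; rewrite ?leq_maxl //.
  by apply/dvdp_add/dvdRq_dvdp/dvdRq_bseries_X; rewrite ?leq_maxl.
move/(dvdp_mull d); rewrite mulrA -expr2 natr_bool_subr_sqr // mul1r.
by rewrite Phi_exp_dvdp_T_eq.
Qed.

Lemma G_Phi_exp_gt0 k : (0 < G (P ^+ k.+1))%N.
Proof.
rewrite lt0n; apply/eqP => G0.
have := G_dvd (PhiS_exp k.+1 Sm) (p := 1); rewrite G0 => /(_ (rpred1 _)).
move=> /dvdRq_dvdp /(dvdp_trans (dvdp_exp2l P (ltn0Sn k))).
by rewrite expr1 PhiC_dvdp1 ?S_gt0.
Qed.

Lemma restr_iso_false : False.
Proof.
have restr_bits (c : nat -> bool) :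
    exists y, complI R I y /\ eqS R S (fun f => y (G f)) (X c).
  by have [y Iy y_restr] := restr_surj (complS_X c); exists y.
have [Y Y_restr] := choice _ restr_bits.
apply: (@cantor_first_difference _ (fun c => Y c 1%N)) => c c' k0 neq_cc' agree.
apply/eqP => eqY; move: (X_separates neq_cc' agree); set f := P ^+ k0.+1.
have Sf : PhiS S f := PhiS_exp _ Sm.
have Jf := dvdRq_is_ideal (PhiS_polyOver Sf).
have := dvdRq_dvdp (idealB Jf ((Y_restr c').2 f Sf) ((Y_restr c).2 f Sf)).
rewrite !(complI_const (Y_restr _).1 (G_Phi_exp_gt0 k0)) eqY.
have -> : Y c' 1%N - X c' f - (Y c' 1%N - X c f) = X c f - X c' f by ring.
by move=> ->.
Qed.

End NoIsoToCyclotomicCompletion.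

Lemma no_induced_iso_I_to_S S I :
  (forall m, S m -> (0 < m)%N) -> (forall n, exists m, (n <= m)%N /\ S m) ->
  is_ideal R I -> ~ induced_iso_I_to_S R S I.
Proof.
move=> S_gt0 S_inf I_ideal [G [G_dvd [_ restr_surj]]].
have [m [_ Sm]] := S_inf 0%N.
exact: restr_iso_false S_gt0 S_inf I_ideal G_dvd restr_surj m Sm.
Qed.

End Subring.

Theorem proposition6p2 (R : {pred algC}) (S : nat -> Prop) :
  subring_closed R ->
  (forall m, S m -> (0 < m)%N) ->
  (forall n, exists m, (n <= m)%N /\ S m) ->
  ~ (exists I : {poly algC} -> Prop, is_ideal R I /\ id_induces_iso R S I).
Proof.
move=> R_subring S_gt0 S_inf [I [I_ideal [iso|iso]]].
  exact: (no_induced_iso_S_to_I R_subring S_gt0 S_inf I_ideal iso).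
exact: (no_induced_iso_I_to_S R_subring S_gt0 S_inf I_ideal iso).
Qed.
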